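(* Let $S$ be any connected shape whose nodes occupy $l$ rows and $w$ columns of the grid. Then, in the adjacency graph model with cycle-breaking growth processes and neighbor handover allowed, there is a growth process that grows $S$ from a single node in $O(\log l+\log w)$ time steps.
   Context: Shapes. Grid points are integer pairs $(x,y)$; two grid points are adjacent if they are at orthogonal (Manhattan) distance $1$. A shape $S=(V,E)$ is a finite connected graph whose nodes occupy distinct grid points and whose edges join only pairs of nodes occupying adjacent points; shapes are considered up to translation. The adjacency closure $AC(S)$ is obtained from $S$ by adding an edge between every pair of adjacent nodes that are not yet joined. Growth operations. One node, the anchor $u_0$, is stationary; other nodes move relative to it. A growth operation on a node $u$ toward an adjacent grid point $p$ either (i) if $u$ has no edge to $p$, creates a new node $u'$ at $p$ with edge $uu'$; or (ii) if $p$ is occupied by a node $v$ with $uv\in E$, creates a new node $u'$ at $p$, replaces edge $uv$ by edges $uu',u'v$, and translates by one unit, along the axis of $uv$, the part of a spanning tree rooted at $u_0$ hanging from whichever of $u,v$ is farther from $u_0$, away from the other endpoint. With neighbor handover, in addition any neighbor $w$ of $u$ lying in a direction perpendicular to $uu'$ may be handed over to $u'$ (become joined to $u'$ instead of $u$) by a unit translation parallel to $uu'$ of the subtree of whichever of $u,w$ is farther from $u_0$. In one time step a set of operations is applied concurrently, each node receiving at most one operation and all operations having the same cardinal direction; the displacement of each node is the sum of the unit vectors contributed by the operations on its path to $u_0$ in a spanning tree rooted at $u_0$. The set is collision-free if no two nodes collide during these motions or end at the same point, and for every cycle and every two of its nodes the displacements accumulated along the two paths of the cycle between them are equal. Growth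 processes. A cycle-breaking growth process in the adjacency graph model starts from $S_1^b=S_0$; in each time step $t$ it first deletes a (possibly empty) subset of edges of $S_t^b$ whose removal keeps the shape connected, then applies a collision-free set of growth operations, obtaining $S_t^e$, and sets $S_{t+1}^b=AC(S_t^e)$. It grows $S$ in $t_f$ steps if the shape after step $t_f$ is $S$. *)

From mathcomp Require Import all_boot all_order all_algebra.
From Stdlib Require Import Relations.
Set Implicit Arguments. Unset Strict Implicit. Unset Printing Implicit Defensive.
Import Order.TTheory GRing.Theory Num.Theory.
Local Open Scope ring_scope.

Definition point := (int * int)%type.
Definition padd (a b : point) : point := (a.1 + b.1, a.2 + b.2).
Definition psub (a b : point) : point := (a.1 - b.1, a.2 - b.2).
Definition adjacent (a b : point) : Prop := `|a.1 - b.1| + `|a.2 - b.2| = 1.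
Definition dirs : seq point := [:: (1, 0); (-1, 0); (0, 1); (0, -1)].
Definition perpendicular (v d : point) : Prop := v.1 * d.1 + v.2 * d.2 = 0.

(* A shape: nodes are identified with the (distinct) grid points they
   occupy; edges form a relation on points. *)
Record gshape := Shape { sV : seq point; sE : point -> point -> Prop }.

Definition shape_connected (S : gshape) : Prop :=
  forall a b, a \in sV S -> b \in sV S -> clos_refl_trans point (sE S) a b.

Definition wf_shape (S : gshape) : Prop :=
  [/\ sV S != [::],
      (forall a b, sE S a b -> [/\ a \in sV S, b \in sV S & adjacent a b]),
      (forall a b, sE S a b -> sE S b a) & shape_connected S].

Definition AC (S : gshape) : gshape :=
  Shape (sV S) (fun a b => sE S a b \/ [/\ a \in sV S, b \in sV S & adjacent a b]).

Definition adj_shape (P : seq point) : gshape :=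
  Shape P (fun a b => [/\ a \in P, b \in P & adjacent a b]).

Definition shape_equiv (S T : gshape) : Prop :=
  exists t : point,
    (forall x, (x \in sV S) = (padd x t \in sV T)) /\
    (forall a b, sE S a b <-> sE T (padd a t) (padd b t)).

Definition edge_deletion (S G : gshape) : Prop :=
  [/\ sV G = sV S, (forall a b, sE G a b -> sE S a b),
      (forall a b, sE G a b -> sE G b a) & shape_connected G].

(* nodes after a growth step: old nodes (named by their initial point) and
   the new node u' created by the operation on node u (named New u) *)
Inductive gnode := Old of point | New of point.

Section Step.
Variables (G : gshape) (d : point) (O : seq point) (H : point -> point -> Prop).
(* O = nodes receiving a growth operation (toward u + d);
   H u w = neighbor w of u is handed over to u'. *)

Definition is_node (x : gnode) : Prop :=
  match x with Old a => a \in sV G | New u => u \in O end.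

Definition start_pos (x : gnode) : point :=
  match x with Old a => a | New u => u end.

(* the operation on u is of type (ii) on the edge u(u+d) *)
Definition split_edge (a b : point) : Prop := a \in O /\ b = padd a d /\ sE G a b.

Definition valid_ops : Prop :=
  [/\ uniq O, (forall u, u \in O -> u \in sV G),
      (forall u w, H u w -> [/\ u \in O, sE G u w & perpendicular (psub w u) d]) &
      (forall u w, H u w -> ~ H w u)].

Definition FE (x y : gnode) (v : point) : Prop :=
  (exists a b, [/\ x = Old a, y = Old b, sE G a b,
     ~ split_edge a b /\ ~ split_edge b a /\ ~ H a b /\ ~ H b a & v = psub b a])
  \/ (exists u, [/\ u \in O, x = Old u, y = New u & v = d])
  \/ (exists u, [/\ split_edge u (padd u d), x = New u, y = Old (padd u d) & v = d])
  \/ (exists u w, [/\ H u w, x = New u, y = Old w & v = psub w u]).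

Definition NE (x y : gnode) : Prop := exists v, FE x y v \/ FE y x v.

(* linear motion from relative position r0 to r1 never hits 0 for t in (0,1] *)
Definition no_collision (r0 r1 : point) : Prop :=
  ~ exists t : rat, [/\ 0 < t, t <= 1,
      r0.1%:~R + t * (r1.1 - r0.1)%:~R = 0 & r0.2%:~R + t * (r1.2 - r0.2)%:~R = 0].

(* F = final positions; the anchor is stationary, edge vectors are respected
   (equivalently: displacements agree along every cycle), collision-free *)
Definition motion_ok (F : gnode -> point) : Prop :=
  [/\ (exists u0, u0 \in sV G /\ F (Old u0) = u0),
      (forall x y v, FE x y v -> psub (F y) (F x) = v) &
      (forall x y, is_node x -> is_node y -> x <> y ->
         no_collision (psub (start_pos x) (start_pos y)) (psub (F x) (F y)))].

Definition grown (F : gnode -> point) : gshape :=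
  Shape ([seq F (Old a) | a <- sV G] ++ [seq F (New u) | u <- O])
        (fun a b => exists x y, [/\ NE x y, F x = a & F y = b]).
End Step.

(* one time step of a cycle-breaking growth process (adjacency graph model,
   neighbor handover allowed): S = S_t^b, T = S_{t+1}^b *)
Definition growth_step (S T : gshape) : Prop :=
  exists (G : gshape) (d : point) (O : seq point) (H : point -> point -> Prop)
         (F : gnode -> point),
    [/\ edge_deletion S G, d \in dirs, valid_ops G d O H, motion_ok G d O H F
      & T = AC (grown G d O H F)].

Inductive reach : nat -> gshape -> gshape -> Prop :=
| reach0 S : reach 0 S S
| reachS n S T U : growth_step S T -> reach n T U -> reach n.+1 S U.

Definition single_node : gshape := Shape [:: (0, 0)] (fun _ _ => False).

Definition nrows (P : seq point) : nat := size (undup [seq p.2 | p <- P]).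
Definition ncols (P : seq point) : nat := size (undup [seq p.1 | p <- P]).

From Pilot Require Import Defs.
From mathcomp Require Import all_boot all_order all_algebra.
From mathcomp Require Import zify ring lra.
From Stdlib Require Import Relations.
Set Implicit Arguments. Unset Strict Implicit. Unset Printing Implicit Defensive.
Import Order.TTheory GRing.Theory Num.Theory.
Local Open Scope ring_scope.

(* The idea is halving.  For an axis direction d, [halve d] divides the
   d-coordinate of a point by 2, rounding down.  It maps a connected point
   set P to a connected point set Q whose extent along d is halved, and P is
   grown from the adjacency shape of Q in a SINGLE growth step: every node q
   moves to the cell [target d P q] among [double d q], [double d q + d] that
   lies in P; nodes whose two preimages both lie in P grow a new node in
   direction d; before growing, the edges of Q not witnessed by adjacencies
   of P are deleted, and a neighbour w of a growing node u is handed over to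
   the new node whenever u and w would otherwise drift apart.  Iterating the
   halving in both directions, a connected set of width < 2^a and height
   < 2^b is grown in a + b steps, and the width (height) of a connected set
   is at most its number of columns (rows). *)

Lemma pairE (a b c e : int) : ((a, b) = (c, e)) <-> (a = c /\ b = e).
Proof. by split; [case=> -> -> | case=> -> ->]. Qed.

Definition axis_dir (d : point) : Prop := d = (1, 0) \/ d = (0, 1).

Definition double (d q : point) : point := (q.1 + q.1 * d.1, q.2 + q.2 * d.2).
Definition halve (d p : point) : point :=
  if d == (1, 0) then ((p.1 %/ 2)%Z, p.2) else (p.1, (p.2 %/ 2)%Z).

Definition coord (d p : point) : int := p.1 * d.1 + p.2 * d.2.
Definition other_axis (d : point) : point := (d.2, d.1).

Ltac point_arith :=
  unfold double, halve, coord, padd, psub, adjacent, perpendicular in *;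
  repeat match goal with p : point |- _ => let a := fresh "a" in
     let b := fresh "b" in destruct p as [a b] end;
  simpl in *;
  repeat match goal with H : context [(_, _) = (_, _)] |- _ =>
     rewrite pairE in H end;
  rewrite ?pairE.

Lemma adjacent_sym a b : adjacent a b -> adjacent b a.
Proof. point_arith; lia. Qed.

Lemma adjacent_translate a b t : adjacent (padd a t) (padd b t) <-> adjacent a b.
Proof. point_arith; split; lia. Qed.

Lemma psub_translate a b t : psub (padd b t) (padd a t) = psub b a.
Proof. point_arith; lia. Qed.

Lemma psub_shift a b t : psub (psub a t) (psub b t) = psub a b.
Proof. point_arith; lia. Qed.

Lemma psub_psub a u : psub a (psub a u) = u.
Proof. point_arith; lia. Qed.

Lemma psubK x t : padd (psub x t) t = x.
Proof. point_arith; lia. Qed.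

Lemma paddK x t : psub (padd x t) t = x.
Proof. point_arith; lia. Qed.

Lemma padd_psub a b : psub (padd a b) a = b.
Proof. point_arith; lia. Qed.

Lemma paddA x t m : padd (padd x t) m = padd x (padd t m).
Proof. point_arith; lia. Qed.

Lemma adjacent_same_vector x y a b :
  psub y x = psub b a -> adjacent a b -> adjacent x y.
Proof. point_arith; lia. Qed.

Lemma adjacent_axis_dir d x y : axis_dir d -> psub y x = d -> adjacent x y.
Proof. by case=> ->; point_arith; lia. Qed.

Lemma halve_cases d p : axis_dir d ->
  p = double d (halve d p) \/ p = padd (double d (halve d p)) d.
Proof. by case=> ->; point_arith; lia. Qed.

Lemma halve_adjacent d p1 p2 : axis_dir d -> adjacent p1 p2 ->
  halve d p1 = halve d p2 \/ adjacent (halve d p1) (halve d p2).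
Proof. by case=> ->; point_arith; lia. Qed.

Lemma coord_halve_shift d p (c : int) : axis_dir d ->
  coord d (halve d (psub p (c * d.1, c * d.2))) = ((coord d p - c) %/ 2)%Z.
Proof. by case=> ->; point_arith; lia. Qed.

Lemma coord_other_halve_shift d p (c : int) : axis_dir d ->
  coord (other_axis d) (halve d (psub p (c * d.1, c * d.2))) =
  coord (other_axis d) p.
Proof. by case=> ->; point_arith; lia. Qed.

(* The cell of P into which the cell q of [map (halve d) P] expands: its
   double if that lies in P, and otherwise the next cell along d. *)
Definition target (d : point) (P : seq point) (q : point) : point :=
  if double d q \in P then double d q else padd (double d q) d.

Lemma target_cases d (P : seq point) q :
  target d P q = double d q /\ double d q \in P \/
  target d P q = padd (double d q) d /\ double d q \notin P.
Proof. by rewrite /target; case: ifP => h; [left|right]; split=> //; rewrite h. Qed.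

Lemma halve_preimage d (P : seq point) p q : axis_dir d -> halve d p = q ->
  p \in P -> (p = double d q /\ double d q \in P) \/
             (p = padd (double d q) d /\ padd (double d q) d \in P).
Proof. by move=> hd <- hp; case: (halve_cases p hd) => h; [left|right]; rewrite -h. Qed.

Lemma target_in d (P : seq point) q : axis_dir d ->
  q \in map (halve d) P -> target d P q \in P.
Proof.
move=> hd /mapP [p hp ->]; rewrite /target; case: ifP => // hn.
by case: (halve_preimage hd erefl hp) => -[_ m] //; rewrite m in hn.
Qed.

Lemma target_plain_edge d (P : seq point) (a b xa xb p1 p2 : point) :
  axis_dir d -> adjacent a b -> psub xb xa = psub b a ->
  p1 \in P -> p2 \in P -> adjacent p1 p2 -> halve d p1 = xa -> halve d p2 = xb ->
  ((double d xa \in P) && (padd (double d xa) d \in P) -> b <> padd a d) ->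
  ((double d xb \in P) && (padd (double d xb) d \in P) -> a <> padd b d) ->
  ((double d xa \in P) && (padd (double d xa) d \in P) ->
     perpendicular (psub b a) d ->
     target d P xb = padd (target d P xa) (psub b a)) ->
  ((double d xb \in P) && (padd (double d xb) d \in P) ->
     perpendicular (psub a b) d ->
     target d P xa = padd (target d P xb) (psub a b)) ->
  psub (target d P xb) (target d P xa) = psub b a.
Proof.
move=> hd hab hx h1 h2 h12 g1 g2 oa ob ha hb.
case: (halve_preimage hd g1 h1) => -[e1 m1];
  case: (halve_preimage hd g2 h2) => -[e2 m2]; subst p1 p2;
  rewrite m1 m2 /= ?andbT in oa ob ha hb;
  case: (target_cases d P xa) => -[Ea ma]; case: (target_cases d P xb) => -[Eb mb];
  rewrite Ea Eb in ha hb *;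
  rewrite ?ma ?mb /= in oa ob ha hb; try by rewrite ma in m1; try by rewrite mb in m2.
all: try (case: hd => hd; subst d; point_arith; lia).
Qed.

Lemma target_split_edge d (P : seq point) (u b xu xb p1 p2 : point) :
  axis_dir d -> b = padd u d -> psub xb xu = psub b u ->
  p1 \in P -> p2 \in P -> adjacent p1 p2 -> halve d p1 = xu -> halve d p2 = xb ->
  double d xu \in P -> padd (double d xu) d \in P ->
  psub (target d P xb) (padd (target d P xu) d) = d.
Proof.
move=> hd hb hx h1 h2 h12 g1 g2 m0 m1.
case: (halve_preimage hd g1 h1) => -[e1 n1];
  case: (halve_preimage hd g2 h2) => -[e2 n2]; subst p1 p2;
  case: (target_cases d P xu) => -[Ea ma]; case: (target_cases d P xb) => -[Eb mb];
  rewrite Ea Eb; try by rewrite ?ma ?mb in m0 n2.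
all: try (case: hd => hd; subst d; point_arith; lia).
Qed.

Lemma target_handover_edge d (P : seq point) (u w xu xw p1 p2 : point) :
  axis_dir d -> adjacent u w -> perpendicular (psub w u) d ->
  psub xw xu = psub w u ->
  p1 \in P -> p2 \in P -> adjacent p1 p2 -> halve d p1 = xu -> halve d p2 = xw ->
  double d xu \in P -> padd (double d xu) d \in P ->
  target d P xw <> padd (target d P xu) (psub w u) ->
  psub (target d P xw) (padd (target d P xu) d) = psub w u.
Proof.
move=> hd huw hp hx h1 h2 h12 g1 g2 m0 m1 hne.
case: (halve_preimage hd g1 h1) => -[e1 n1];
  case: (halve_preimage hd g2 h2) => -[e2 n2]; subst p1 p2;
  case: (target_cases d P xu) => -[Ea ma]; case: (target_cases d P xw) => -[Eb mb];
  rewrite Ea Eb in hne *; try by rewrite ?ma ?mb in m0 n2.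
all: try (case: hd => hd; subst d; point_arith; lia).
Qed.

(* Two cells whose doubles both lie in P keep their perpendicular offset;
   this is why handovers are never mutual. *)
Lemma target_perpendicular d (P : seq point) (u w xu xw : point) :
  axis_dir d -> perpendicular (psub w u) d -> psub xw xu = psub w u ->
  double d xu \in P -> double d xw \in P ->
  target d P xw = padd (target d P xu) (psub w u).
Proof.
move=> hd hp hx m0 m1; rewrite /target m0 m1.
by case: hd => hd; subst d; point_arith; lia.
Qed.

(* A sufficient condition for the straight-line motion of a relative
   position from r0 to r1 to avoid 0: some coordinate keeps a strict sign,
   or starts at 0 and ends away from 0. *)
Definition separated (r0 r1 : point) : Prop :=
  (0 < r0.1 /\ 0 < r1.1) \/ (r0.1 < 0 /\ r1.1 < 0) \/ (r0.1 = 0 /\ r1.1 != 0) \/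
  (0 < r0.2 /\ 0 < r1.2) \/ (r0.2 < 0 /\ r1.2 < 0) \/ (r0.2 = 0 /\ r1.2 != 0).

Lemma interpolation_nonzero (a b : int) (s : rat) : 0 < s -> s <= 1 ->
  (0 < a /\ 0 < b) \/ (a < 0 /\ b < 0) \/ (a = 0 /\ b != 0) ->
  a%:~R + s * (b - a)%:~R != 0 :> rat.
Proof.
move=> s0 s1 h.
have -> : a%:~R + s * (b - a)%:~R = (1 - s) * a%:~R + s * b%:~R :> rat.
  by rewrite intrB; ring.
case: h => [[ha hb]|[[ha hb]|[ha hb]]].
- have ha' : (0 : rat) < a%:~R by rewrite ltr0z.
  have hb' : (0 : rat) < b%:~R by rewrite ltr0z.
  apply/negP => /eqP h; nra.
- have ha' : (a%:~R : rat) < 0 by rewrite ltrz0.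
  have hb' : (b%:~R : rat) < 0 by rewrite ltrz0.
  apply/negP => /eqP h; nra.
- by rewrite ha mulr0 add0r mulf_eq0 negb_or intr_eq0 hb andbT gt_eqF.
Qed.

Lemma separated_no_collision r0 r1 : separated r0 r1 -> no_collision r0 r1.
Proof.
move=> h [s [s0 s1 h1 h2]].
have [h'|h'] : ((0 < r0.1 /\ 0 < r1.1) \/ (r0.1 < 0 /\ r1.1 < 0) \/
                (r0.1 = 0 /\ r1.1 != 0)) \/
               ((0 < r0.2 /\ 0 < r1.2) \/ (r0.2 < 0 /\ r1.2 < 0) \/
                (r0.2 = 0 /\ r1.2 != 0)) by rewrite /separated in h; tauto.
- by move: (interpolation_nonzero s0 s1 h'); rewrite h1 eqxx.
- by move: (interpolation_nonzero s0 s1 h'); rewrite h2 eqxx.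
Qed.

Definition moved_double d t x (k : int) : point :=
  psub (padd (double d x) (k * d.1, k * d.2)) t.

Lemma moved_double0 d t x : psub (double d x) t = moved_double d t x 0.
Proof. rewrite /moved_double; point_arith; lia. Qed.

Lemma moved_double1 d t x : psub (padd (double d x) d) t = moved_double d t x 1.
Proof. rewrite /moved_double; point_arith; lia. Qed.

(* Nodes that start at distinct cells s1, s2 and end at the doubles of their
   cells moved by 0 or 1 along d never collide (the same cell must be moved
   by different amounts). *)
Lemma moved_double_separated d (s1 s2 t t' : point) (k1 k2 : int) :
  axis_dir d -> (k1 = 0 \/ k1 = 1) -> (k2 = 0 \/ k2 = 1) ->
  (s1 = s2 -> k1 <> k2) ->
  separated (psub s1 s2)
    (psub (moved_double d t' (padd s1 t) k1) (moved_double d t' (padd s2 t) k2)).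
Proof.
rewrite /separated /moved_double => hd hk1 hk2 hs.
by case: hd => hd; subst d; point_arith; lia.
Qed.

Definition adj_closed (S : gshape) : Prop := forall a b,
  sE S a b <-> [/\ a \in sV S, b \in sV S & adjacent a b].

Definition placed (S : gshape) (P : seq point) (t : point) : Prop :=
  forall x, (x \in sV S) = (padd x t \in P).

Lemma adj_closed_equiv S P t :
  adj_closed S -> placed S P t -> shape_equiv S (adj_shape P).
Proof.
move=> hA hV; exists t; split=> // a b; rewrite hA /= (hV a) (hV b).
have := adjacent_translate a b t; split=> -[h1 h2 h3]; split=> //; tauto.
Qed.

Lemma single_node_adj_closed : adj_closed single_node.
Proof.
move=> a b; split=> //= -[]; rewrite !inE => /eqP -> /eqP ->.
by rewrite /adjacent /=; lia.
Qed.

Lemma connected_image (P : seq point) (f : point -> point)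
    (R : point -> point -> Prop) :
  shape_connected (adj_shape P) ->
  (forall p1 p2, p1 \in P -> p2 \in P -> adjacent p1 p2 ->
     f p1 = f p2 \/ R (f p1) (f p2)) ->
  forall p1 p2, p1 \in P -> p2 \in P -> clos_refl_trans point R (f p1) (f p2).
Proof.
move=> hc hR p1 p2 h1 h2; elim: (hc p1 p2 h1 h2) =>
  [x y [hx hy hxy]|x|x y z _ IH1 _ IH2].
- by case: (hR x y hx hy hxy) => [->|h]; [apply: rt_refl|apply: rt_step].
- exact: rt_refl.
- exact: rt_trans IH1 IH2.
Qed.

Lemma connected_map (P : seq point) (f : point -> point) :
  shape_connected (adj_shape P) ->
  (forall p1 p2, adjacent p1 p2 -> f p1 = f p2 \/ adjacent (f p1) (f p2)) ->
  shape_connected (adj_shape (map f P)).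
Proof.
move=> hc hf a b /mapP [p1 h1 ->] /mapP [p2 h2 ->].
apply: (connected_image hc _ h1 h2) => x y hx hy hxy.
by case: (hf x y hxy) => [->|h]; [left|right; split=> //; apply: map_f].
Qed.

Definition shift_pts (P : seq point) (m : point) : seq point :=
  map (fun p => psub p m) P.

Lemma mem_shift_pts P m x : (x \in shift_pts P m) = (padd x m \in P).
Proof.
apply/mapP/idP => [[p hp ->]|h]; first by rewrite psubK.
by exists (padd x m); rewrite ?paddK.
Qed.

Lemma connected_shift_pts P m :
  shape_connected (adj_shape P) -> shape_connected (adj_shape (shift_pts P m)).
Proof.
move=> hc; apply: connected_map => // p1 p2 h; right.
by apply: (adjacent_same_vector (a := p1) (b := p2)); rewrite ?psub_shift.
Qed.

Lemma reach_snoc n S T U : reach n S T -> growth_step T U -> reach n.+1 S U.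
Proof.
elim=> [S0 h|m S0 T0 U0 h1 h2 IH h3]; first exact: reachS h (reach0 _).
exact: reachS h1 (IH h3).
Qed.

Section OneStep.
(* One growth step from the adjacency shape S of the halved set
   [map (halve d) P], placed with translation t, to the adjacency shape of P. *)
Variables (d : point) (P : seq point) (S : gshape) (t : point).
Hypotheses (hd : axis_dir d) (hS : adj_closed S)
  (hV : placed S (map (halve d) P) t) (hne : sV S != [::])
  (hc : shape_connected (adj_shape P)).

Definition witnessed (a b : point) : Prop := exists p1 p2,
  [/\ p1 \in P, p2 \in P, adjacent p1 p2,
      halve d p1 = padd a t & halve d p2 = padd b t].

Definition kept : gshape := Shape (sV S)
  (fun a b => [/\ a \in sV S, b \in sV S, adjacent a b & witnessed a b]).

Definition splits (a : point) : bool :=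
  (double d (padd a t) \in P) && (padd (double d (padd a t)) d \in P).

Definition grow_ops : seq point := [seq a <- undup (sV S) | splits a].

Definition handover (u w : point) : Prop :=
  [/\ u \in grow_ops, sE kept u w, perpendicular (psub w u) d &
      target d P (padd w t) <> padd (target d P (padd u t)) (psub w u)].

(* The first node serves as anchor; all final positions are translated so
   that it does not move. *)
Definition anchor : point := head (0, 0) (sV S).
Definition anchor_shift : point := psub (target d P (padd anchor t)) anchor.

Definition final (x : gnode) : point :=
  match x with
  | Old a => psub (target d P (padd a t)) anchor_shift
  | New u => psub (padd (target d P (padd u t)) d) anchor_shift
  end.

Definition grown_shape : gshape :=
  Defs.AC (grown kept d grow_ops handover final).

Lemma mem_grow_ops a : (a \in grow_ops) = splits a && (a \in sV S).
Proof. by rewrite mem_filter mem_undup. Qed.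

Lemma node_preimage a : a \in sV S -> exists2 p, p \in P & halve d p = padd a t.
Proof. by rewrite hV => /mapP [p hp ->]; exists p. Qed.

Lemma kept_sym a b : sE kept a b -> sE kept b a.
Proof.
move=> [ha hb hab [p1 [p2 [h1 h2 h12 g1 g2]]]].
by split=> //; [exact: adjacent_sym | exists p2, p1; split=> //; exact: adjacent_sym].
Qed.

(* Every adjacency of P is witnessed, so the kept edges still connect S. *)
Lemma kept_connected : shape_connected kept.
Proof.
move=> a b /= ha hb.
case: (node_preimage ha) => p1 h1 e1; case: (node_preimage hb) => p2 h2 e2.
have -> : a = psub (halve d p1) t by rewrite e1 paddK.
have -> : b = psub (halve d p2) t by rewrite e2 paddK.
apply: (connected_image (f := fun p => psub (halve d p) t) hc _ h1 h2).
move=> x y hx hy hxy; case: (halve_adjacent hd hxy) => [->|hadj]; [by left|right].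
have mx : psub (halve d x) t \in sV S by rewrite hV psubK map_f.
have my : psub (halve d y) t \in sV S by rewrite hV psubK map_f.
split=> //; last by exists x, y; rewrite !psubK.
by apply: (adjacent_same_vector (a := halve d x) (b := halve d y)); rewrite ?psub_shift.
Qed.

Lemma kept_deletion : edge_deletion S kept.
Proof.
split=> //; [by move=> a b [ha hb hab _]; apply/hS | exact: kept_sym |].
exact: kept_connected.
Qed.

Lemma step_valid_ops : valid_ops kept d grow_ops handover.
Proof.
split; first by rewrite filter_uniq // undup_uniq.
- by move=> u; rewrite mem_grow_ops => /andP[].
- by move=> u w [].
move=> u w [hu [_ _ huw _] hp hn] [hw _ _ _]; apply: hn.
move: hu hw; rewrite !mem_grow_ops => /andP [/andP [m1 _] _] /andP [/andP [m2 _] _].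
exact: (target_perpendicular hd hp (psub_translate _ _ _) m1 m2).
Qed.

Lemma anchor_fixed : exists u0, u0 \in sV S /\ final (Old u0) = u0.
Proof.
exists anchor; split; last by rewrite /= /anchor_shift psub_psub.
by rewrite /anchor; case: (sV S) hne => //= x0 l _; rewrite mem_head.
Qed.

Lemma final_plain_edge a b : sE kept a b ->
  ~ split_edge kept d grow_ops a b -> ~ split_edge kept d grow_ops b a ->
  ~ handover a b -> ~ handover b a ->
  psub (final (Old b)) (final (Old a)) = psub b a.
Proof.
move=> hab ns1 ns2 nh1 nh2; rewrite /= psub_shift.
have hba := kept_sym hab.
have [ha hb hadj [p1 [p2 [h1 h2 h12 g1 g2]]]] := hab.
apply: (target_plain_edge hd hadj (psub_translate _ _ _) h1 h2 h12 g1 g2).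
- by move=> ho heq; apply: ns1; split; [rewrite mem_grow_ops /splits ho | split].
- by move=> ho heq; apply: ns2; split; [rewrite mem_grow_ops /splits ho | split].
- move=> ho hp; apply/eqP; apply: contraT => /eqP hn; exfalso.
  by apply: nh1; split=> //; rewrite mem_grow_ops /splits ho.
- move=> ho hp; apply/eqP; apply: contraT => /eqP hn; exfalso.
  by apply: nh2; split=> //; rewrite mem_grow_ops /splits ho.
Qed.

Lemma final_edge_vectors x y v :
  FE kept d grow_ops handover x y v -> psub (final y) (final x) = v.
Proof.
move=> [[a [b [-> -> hab [ns1 [ns2 [nh1 nh2]]] ->]]] |
    [[u [hu -> -> ->]] | [[u [hs -> -> ->]] | [u [w [hH -> -> ->]]]]]].
- exact: final_plain_edge.
- by rewrite /= psub_shift padd_psub.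
- rewrite /= psub_shift.
  case: hs => hu [_ [ha hb hadj [p1 [p2 [h1 h2 h12 g1 g2]]]]].
  move: hu; rewrite mem_grow_ops => /andP [/andP [m1 m2] _].
  exact: (target_split_edge hd erefl (psub_translate _ _ _) h1 h2 h12 g1 g2 m1 m2).
- rewrite /= psub_shift.
  case: hH => hu [ha hb hadj [p1 [p2 [h1 h2 h12 g1 g2]]]] hp hn.
  move: hu; rewrite mem_grow_ops => /andP [/andP [m1 m2] _].
  exact: (target_handover_edge hd hadj hp (psub_translate _ _ _)
                               h1 h2 h12 g1 g2 m1 m2 hn).
Qed.

(* Every node ends at the double of its cell, moved by 0 or 1 along d;
   a new node is moved by 1 while an old node at a splitting cell is not. *)
Definition old_move (a : point) : int :=
  if double d (padd a t) \in P then 0 else 1.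

Lemma final_old a : final (Old a) = moved_double d anchor_shift (padd a t) (old_move a).
Proof.
by rewrite /= /target /old_move; case: ifP => _; [apply: moved_double0|apply: moved_double1].
Qed.

Lemma final_new u : splits u ->
  final (New u) = moved_double d anchor_shift (padd u t) 1.
Proof. by rewrite /splits /= /target => /andP [-> _]; apply: moved_double1. Qed.

Lemma old_move01 a : old_move a = 0 \/ old_move a = 1.
Proof. by rewrite /old_move; case: ifP; [left|right]. Qed.

Lemma old_move_split a : splits a -> old_move a = 0.
Proof. by rewrite /old_move /splits => /andP [-> _]. Qed.

Lemma step_collision_free x y :
  is_node kept grow_ops x -> is_node kept grow_ops y -> x <> y ->
  no_collision (psub (start_pos x) (start_pos y)) (psub (final x) (final y)).
Proof.
move=> hx hy hxy; apply: separated_no_collision.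
have splitsO u : u \in grow_ops -> splits u by rewrite mem_grow_ops => /andP [].
case: x hx hxy => [a|u] hx; case: y hy => [b|w] hy hxy.
- rewrite !final_old; apply: moved_double_separated => //; try exact: old_move01.
  by move=> /= eab; case: hxy; rewrite eab.
- rewrite final_old final_new ?splitsO //.
  apply: moved_double_separated => //; [exact: old_move01 | by right |].
  by move=> /= eab; subst; rewrite old_move_split ?splitsO.
- rewrite final_old final_new ?splitsO //.
  apply: moved_double_separated => //; [by right | exact: old_move01 |].
  by move=> /= eab; subst; rewrite old_move_split ?splitsO.
- rewrite !final_new ?splitsO //; apply: moved_double_separated => //; try by right.
  by move=> /= eab; case: hxy; rewrite eab.
Qed.

Lemma step_motion_ok : motion_ok kept d grow_ops handover final.
Proof.
split; [exact: anchor_fixed | exact: final_edge_vectors | exact: step_collision_free].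
Qed.

Lemma grown_placed : placed grown_shape P anchor_shift.
Proof.
move=> x; rewrite /= mem_cat; apply/idP/idP.
- case/orP => /mapP [a ha ->]; rewrite /= psubK.
  + by apply: target_in; rewrite // -hV.
  + by move: ha; rewrite mem_grow_ops /splits /target => /andP [/andP [-> ->]].
- set p := padd x anchor_shift => hp.
  have -> : x = psub p anchor_shift by rewrite paddK.
  have ha : psub (halve d p) t \in sV S by rewrite hV psubK map_f.
  have [[ep m]|[ep m]] := halve_preimage hd erefl hp.
  + apply/orP; left; apply/mapP; exists (psub (halve d p) t) => //.
    by rewrite /= psubK /target m -ep.
  + case m0: (double d (halve d p) \in P).
    * apply/orP; right; apply/mapP; exists (psub (halve d p) t).
        by rewrite mem_grow_ops ha andbT /splits psubK m0 m.
      by rewrite /= psubK /target m0 -ep.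
    * apply/orP; left; apply/mapP; exists (psub (halve d p) t) => //.
      by rewrite /= psubK /target m0 -ep.
Qed.

Lemma FE_nodes x y v :
  FE kept d grow_ops handover x y v -> is_node kept grow_ops x /\ is_node kept grow_ops y.
Proof.
move=> [[a [b [-> -> [ha hb _ _] _ _]]] |
    [[u [hu -> -> _]] | [[u [[hu [_ [ha hb _ _]]] -> -> _]] | [u [w [hH -> -> _]]]]]] //=.
- by split=> //; move: hu; rewrite mem_grow_ops => /andP [].
- by case: hH => hu [ha hb _ _] _ _.
Qed.

Lemma FE_adjacent x y v :
  FE kept d grow_ops handover x y v -> adjacent (final x) (final y).
Proof.
move=> h; have := final_edge_vectors h.
case: h => [[a [b [-> -> [_ _ hab _] _ ->]]] |
    [[u [hu -> -> ->]] | [[u [_ -> -> ->]] | [u [w [hH -> -> ->]]]]]] he.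
- exact: adjacent_same_vector he hab.
- exact: adjacent_axis_dir hd he.
- exact: adjacent_axis_dir hd he.
- by case: hH => _ [_ _ huw _] _ _; apply: adjacent_same_vector he huw.
Qed.

Lemma final_in x : is_node kept grow_ops x -> final x \in sV grown_shape.
Proof.
by case: x => [a|u] h; rewrite /= mem_cat; apply/orP; [left|right];
  apply/mapP; [exists a|exists u].
Qed.

(* Every edge of the grown shape joins adjacent nodes, so its adjacency
   closure is the adjacency shape of its nodes. *)
Lemma grown_adj_closed : adj_closed grown_shape.
Proof.
move=> a b; split; last by right.
case=> [[x [y [[v [h|h]] <- <-]]]|//].
- case: (FE_nodes h) => nx ny.
  by split; [exact: final_in|exact: final_in|exact: FE_adjacent h].
- case: (FE_nodes h) => ny nx.
  by split; [exact: final_in|exact: final_in|exact: adjacent_sym (FE_adjacent h)].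
Qed.

Lemma grown_step : growth_step S grown_shape.
Proof.
exists kept, d, grow_ops, handover, final; split=> //.
- exact: kept_deletion.
- by case: hd => ->.
- exact: step_valid_ops.
- exact: step_motion_ok.
Qed.
End OneStep.

Definition grows_in (n : nat) (P : seq point) : Prop :=
  exists T t, [/\ reach n single_node T, adj_closed T & placed T P t].

Lemma grows_in_halving d n (P : seq point) : axis_dir d -> P != [::] ->
  shape_connected (adj_shape P) -> grows_in n (map (halve d) P) ->
  grows_in n.+1 P.
Proof.
move=> hd hP hc [T0 [t0 [hr hA hV]]].
have [p hp] : exists p, p \in P by case: P hP {hc hV} => // p ? _; exists p; rewrite mem_head.
have hne : sV T0 != [::].
  have : psub (halve d p) t0 \in sV T0 by rewrite hV psubK map_f.
  by case: (sV T0).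
exists (grown_shape d P T0 t0), (anchor_shift d P T0 t0); split.
- exact: reach_snoc hr (grown_step hd hA hV hne hc).
- exact: grown_adj_closed.
- exact: grown_placed.
Qed.

Lemma grows_in_shift n (P : seq point) m : grows_in n (shift_pts P m) -> grows_in n P.
Proof.
move=> [T [t [hr hA hV]]]; exists T, (padd t m); split=> // x.
by rewrite hV mem_shift_pts paddA.
Qed.

Lemma grows_in_point (P : seq point) p0 :
  p0 \in P -> (forall p, p \in P -> p = p0) -> grows_in 0 P.
Proof.
move=> h0 hall; exists single_node, p0; split.
- exact: reach0.
- exact: single_node_adj_closed.
move=> x; rewrite /= inE; apply/idP/idP => [/eqP ->|/hall].
- by rewrite /padd /= !add0r -surjective_pairing.
- by case: x p0 {h0 hall} => x1 x2 [y1 y2]; rewrite /padd /= => /pairE [h1 h2];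
     apply/eqP/pairE; lia.
Qed.

Definition span (f : point -> int) (P : seq point) (k : nat) : Prop :=
  forall p q, p \in P -> q \in P -> f p - f q < k%:Z.

Lemma exists_minimizer (P : seq point) (f : point -> int) : P != [::] ->
  exists2 p0, p0 \in P & forall p, p \in P -> f p0 <= f p.
Proof.
elim: P => // p P IH _; have [->|hP] := altP (P =P [::]).
  by exists p; rewrite ?inE ?eqxx // => q; rewrite inE => /eqP ->.
have [p0 h0 hm] := IH hP; have [hle|hlt] := leP (f p) (f p0).
- exists p; first by rewrite inE eqxx.
  by move=> q; rewrite inE => /orP [/eqP -> //|/hm]; apply: le_trans.
- exists p0; first by rewrite inE h0 orbT.
  by move=> q; rewrite inE => /orP [/eqP ->|/hm //]; apply: ltW.
Qed.

Lemma half_spread (x y K : int) : 0 <= y -> x < 2 * K -> (x %/ 2)%Z - (y %/ 2)%Z < K.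
Proof. lia. Qed.

(* Halving along d, after translating the minimum of the d-coordinate to 0,
   halves the extent along d and preserves the extent along the other axis;
   hence growing the halved set in n steps grows P in n + 1 steps. *)
Lemma halving_step d n k l (P : seq point) : axis_dir d -> P != [::] ->
  shape_connected (adj_shape P) ->
  span (coord d) P (2 ^ k.+1) -> span (coord (other_axis d)) P l ->
  (forall Q, Q != [::] -> shape_connected (adj_shape Q) ->
     span (coord d) Q (2 ^ k) -> span (coord (other_axis d)) Q l -> grows_in n Q) ->
  grows_in n.+1 P.
Proof.
move=> hd hP hc sd so IH.
have [p0 h0 hm] := exists_minimizer (coord d) hP.
pose c := coord d p0.
have hP' : shift_pts P (c * d.1, c * d.2) != [::] by case: (P) hP.
apply: (@grows_in_shift _ _ (c * d.1, c * d.2)); apply: (grows_in_halving hd hP').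
  exact: connected_shift_pts.
apply: IH.
- by case: (shift_pts _ _) hP'.
- by apply: connected_map; [exact: connected_shift_pts | move=> ? ?; apply: halve_adjacent].
- move=> _ _ /mapP [_ /mapP [p hp ->] ->] /mapP [_ /mapP [q hq ->] ->].
  rewrite !coord_halve_shift //; apply: half_spread; first by rewrite subr_ge0; apply: hm.
  by move: (sd _ _ hp h0); rewrite expnS; move: (2 ^ k)%N => K; lia.
- move=> _ _ /mapP [_ /mapP [p hp ->] ->] /mapP [_ /mapP [q hq ->] ->].
  by rewrite !coord_other_halve_shift //; apply: so.
Qed.

Lemma grows_within_extents a b (P : seq point) : P != [::] ->
  shape_connected (adj_shape P) ->
  span (coord (1, 0)) P (2 ^ a) -> span (coord (0, 1)) P (2 ^ b) ->
  grows_in (a + b) P.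
Proof.
elim: a b P => [|a IHa] b P hP hc sx sy.
- elim: b P hP hc sx sy => [|b IHb] P hP hc sx sy.
  + case: P hP hc sx sy => // p0 P _ _ sx sy.
    apply: (grows_in_point (mem_head p0 P)) => p hp.
    move: (sx _ _ hp (mem_head _ _)) (sx _ _ (mem_head _ _) hp).
    move: (sy _ _ hp (mem_head _ _)) (sy _ _ (mem_head _ _) hp).
    rewrite /coord !expn0; case: p p0 {hp sx sy} => [x y] [x0 y0] /=.
    by move=> h1 h2 h3 h4; apply/pairE; lia.
  + apply: (@halving_step (0, 1) _ b 1%N) => //; first by right.
    by move=> Q hQ hcQ sy' sx'; apply: IHb.
- rewrite addSn; apply: (@halving_step (1, 0) _ a (2 ^ b)%N) => //; first by left.
  by move=> Q hQ hcQ sx' sy'; apply: IHa.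
Qed.

Lemma values_between (P : seq point) (f : point -> int) :
  shape_connected (adj_shape P) ->
  (forall x y, adjacent x y -> `|f x - f y| <= 1) ->
  forall a b, a \in P -> b \in P -> forall c, f a <= c <= f b ->
  exists2 r, r \in P & f r = c.
Proof.
move=> hc hf a b ha hb.
suff : a \in P -> b \in P /\ forall c, (f a <= c <= f b) \/ (f b <= c <= f a) ->
   exists2 r, r \in P & f r = c.
  by move=> /(_ ha) [_ h] c hcc; apply: h; left.
elim: (hc a b ha hb) => [x y [hx hy hxy]|x|x y z _ IH1 _ IH2].
- move=> _; split=> // c hcc; have := hf _ _ hxy.
  by case: (c =P f x) => h1; [exists x | exists y => //; lia].
- by move=> hx; split=> // c hcc; exists x => //; lia.
- move=> hx; case: (IH1 hx) => hy h1; case: (IH2 hy) => hz h2; split=> // c hcc.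
  have [h|h] : ((f x <= c <= f y) \/ (f y <= c <= f x)) \/
     ((f y <= c <= f z) \/ (f z <= c <= f y)) by lia.
  + exact: h1.
  + exact: h2.
Qed.

Lemma span_distinct_values (P : seq point) (f : point -> int) :
  shape_connected (adj_shape P) ->
  (forall x y, adjacent x y -> `|f x - f y| <= 1) ->
  span f P (size (undup (map f P))).
Proof.
move=> hc hf p q hp hq.
have [hpq|hqp] := ltrP (f p) (f q); first by lia.
set k := `|f p - f q|%N.
set L := [seq f q + i%:Z | i <- iota 0 k.+1].
have hu : uniq L by rewrite map_inj_uniq ?iota_uniq // => i j /addrI [].
have hs : {subset L <= undup (map f P)}.
  move=> c /mapP [i]; rewrite mem_iota add0n => /andP [_ hi] ->.
  rewrite mem_undup; have [|r hr <-] := values_between hc hf hq hp (c := f q + i%:Z).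
    by rewrite /k in hi; lia.
  exact: map_f.
have := uniq_leq_size hu hs; rewrite size_map size_iota /k => h.
by apply: le_lt_trans (lez_abs (f p - f q)) _; rewrite ltz_nat.
Qed.

Lemma span_up_log d (P : seq point) : axis_dir d ->
  shape_connected (adj_shape P) ->
  span (coord d) P (2 ^ up_log 2 (size (undup (map (coord d) P)))).
Proof.
move=> hd hc p q hp hq.
have hf x y : adjacent x y -> `|coord d x - coord d y| <= 1.
  by case: hd => ->; point_arith; lia.
apply: lt_le_trans (span_distinct_values hc hf hp hq) _.
by rewrite lez_nat; apply: up_logP.
Qed.

Lemma map_coord_x (P : seq point) : map (coord (1, 0)) P = map fst P.
Proof. by apply: eq_map => p; rewrite /coord mulr1 mulr0 addr0. Qed.

Lemma map_coord_y (P : seq point) : map (coord (0, 1)) P = map snd P.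
Proof. by apply: eq_map => p; rewrite /coord mulr1 mulr0 add0r. Qed.

Theorem theorem4p2 :
  exists C : nat, forall P : seq point,
    P != [::] -> shape_connected (adj_shape P) ->
    exists (tf : nat) (T : gshape),
      [/\ (tf <= C * (up_log 2 (nrows P) + up_log 2 (ncols P)))%N,
          reach tf single_node T & shape_equiv T (adj_shape P)].
Proof.
exists 1%N => P hP hc.
have sx : span (coord (1, 0)) P (2 ^ up_log 2 (ncols P)).
  by rewrite /ncols -map_coord_x; apply: span_up_log => //; left.
have sy : span (coord (0, 1)) P (2 ^ up_log 2 (nrows P)).
  by rewrite /nrows -map_coord_y; apply: span_up_log => //; right.
have [T [t [hr hA hV]]] := grows_within_extents hP hc sx sy.
exists (up_log 2 (ncols P) + up_log 2 (nrows P))%N, T; split=> //.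
- by rewrite mul1n addnC.
- exact: adj_closed_equiv hA hV.
Qed.
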